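(* Suppose $-A_{22}$ is m-dissipative in $\mathcal H^-$ and $G(\mu)=A_{12}(A_{22}-\mu)^{-1}$ is compact for some (equivalently all) $\mu\in\mathbb C^-$. Then for every $\gamma\in[0,\pi/2)$, $\|G(\mu)\|\to0$ as $|\mu|\to\infty$, uniformly in the sector $\{\mu\ne0:\ |\arg\mu-\pi|\le\gamma\}$.
   Context: $\mathcal H=\mathcal H^+\oplus\mathcal H^-$ is an orthogonal decomposition of a separable Hilbert space. $A_{22}$ is a linear operator in $\mathcal H^-$ with domain $\mathcal D^-$, and $A_{12}:\mathcal D^-\to\mathcal H^+$ is linear; for $\mu\in\rho(A_{22})$, $G(\mu)=A_{12}(A_{22}-\mu)^{-1}$, defined on all of $\mathcal H^-$. An operator $T$ is dissipative if $\operatorname{Re}(Tx,x)\le0$ on $\mathcal D(T)$, and m-dissipative if it is dissipative with $T-\lambda$ boundedly invertible for all $\operatorname{Re}\lambda>0$. $\mathbb C^-=\{\operatorname{Re}\mu<0\}$. *)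

From HB Require Import structures.
From mathcomp Require Import all_boot all_order all_algebra.
From mathcomp Require Import complex.
From mathcomp Require Import all_classical all_reals all_analysis.
Set Implicit Arguments. Unset Strict Implicit. Unset Printing Implicit Defensive.
Import Order.TTheory GRing.Theory Num.Theory.
Import numFieldNormedType.Exports.
Local Open Scope classical_set_scope.
Local Open Scope ring_scope.

(* A complex Hilbert space: a complete normed space over C = R[i] whose norm
   comes from an inner product (linear in the first argument, conjugate
   symmetric, (x,x) = ||x||^2). *)
Record inner_product (R : realType) (V : completeNormedModType R[i]) := InnerProduct {
  ip : V -> V -> R[i];
  ipDl : forall (a : R[i]) (x y z : V), ip (a *: x + y) z = a * ip x z + ip y z;
  ip_conj : forall x y : V, ip x y = (ip y x)^*;
  ip_norm : forall x : V, ip x x = `|x| ^+ 2 }.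

Definition separable (T : topologicalType) :=
  exists S : set T, countable S /\ closure S = setT.

Definition lin_subspace (R : realType) (V : normedModType R[i]) (D : set V) :=
  D 0 /\ forall (a : R[i]) (x y : V), D x -> D y -> D (a *: x + y).

Definition linear_on (R : realType) (V W : normedModType R[i]) (D : set V)
  (f : V -> W) :=
  forall (a : R[i]) (x y : V), D x -> D y -> f (a *: x + y) = a *: f x + f y.

Definition bounded_linear (R : realType) (V W : normedModType R[i]) (f : V -> W) :=
  linear_on setT f /\ exists M : R[i], forall x, `|f x| <= M * `|x|.

(* RR is the bounded inverse (T - lam)^{-1} of T - lam, T with domain D;
   i.e. lam lies in the resolvent set and RR is the resolvent. *)
Definition bounded_inverse_of (R : realType) (V : normedModType R[i]) (D : set V)
  (T : V -> V) (lam : R[i]) (RR : V -> V) :=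
  bounded_linear RR /\
  (forall y, D (RR y) /\ T (RR y) - lam *: RR y = y) /\
  (forall x, D x -> RR (T x - lam *: x) = x).

Definition in_resolvent_set (R : realType) (V : normedModType R[i]) (D : set V)
  (T : V -> V) (lam : R[i]) := exists RR, bounded_inverse_of D T lam RR.

Definition dissipative (R : realType) (V : completeNormedModType R[i])
  (I : inner_product V) (D : set V) (T : V -> V) :=
  forall x, D x -> 'Re (ip I (T x) x) <= 0.

Definition m_dissipative (R : realType) (V : completeNormedModType R[i])
  (I : inner_product V) (D : set V) (T : V -> V) :=
  dissipative I D T /\
  forall lam : R[i], 0 < 'Re lam -> in_resolvent_set D T lam.

Definition compact_operator (R : realType) (V W : normedModType R[i]) (f : V -> W) :=
  bounded_linear f /\ compact (closure [set f x | x in [set x : V | `|x| <= 1]]).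

(* the closed sector { mu <> 0 : |arg mu - pi| <= gamma } *)
Definition sector (R : realType) (gamma : R) : set R[i] :=
  [set mu | mu != 0 /\ exists theta : R, `|theta - pi| <= gamma /\
      mu = `|mu| * (cos theta +i* sin theta)%C].

From HB Require Import structures.
From mathcomp Require Import all_boot all_order all_algebra.
From mathcomp Require Import complex.
From mathcomp Require Import all_classical all_reals all_analysis.
From mathcomp Require Import finmap.
From mathcomp Require Import ring lra.
Import Order.TTheory GRing.Theory Num.Theory.
Import numFieldNormedType.Exports.
Local Open Scope classical_set_scope.
Local Open Scope ring_scope.
Set Implicit Arguments. Unset Strict Implicit. Unset Printing Implicit Defensive.

(* Write R0 = (A22 - mu0)^-1, so that K = A12 R0 is compact, and for mu in the
   sector let w = (A22 - mu)^-1 x and y = (A22 - mu0) w = x + (mu - mu0) w; then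
   A12 w = K y. Dissipativity of -A22 gives |mu| cos gamma |w| <= |x|, hence
   |y| <= (1 + 2 / cos gamma) |x| while |R0 y| = |w| = O(|x| / |mu|).
   It remains that K is small wherever the injective operator R0 is small: on
   the unit ball, |K y| <= eps once |R0 y| <= delta. Each functional <K _, z> is
   a limit of functionals <R0 _, v>, because the range of the adjoint of R0 is
   dense (its orthogonal complement is ker R0 = 0, via the Riesz and projection
   theorems), and finitely many z form an eps-net of the compact image of the
   ball. *)

Import Normc.

Section RealNorm.
Variable R : realType.

Definition rnorm (V : normedModType R[i]) (x : V) : R := complex.Re `|x|.

Lemma normrE_normC (a : R[i]) : `|a| = (normc a)%:C%C.
Proof. by case: a. Qed.

Lemma normc_ge0 (a : R[i]) : 0 <= normc a.
Proof. by case: a => ? ?; exact: sqrtr_ge0. Qed.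

Lemma normc_real (a : R) : normc (a%:C)%C = `|a|.
Proof. by rewrite /normc /= expr0n addr0 sqrtr_sqr. Qed.

Lemma normr_Re_le_normc (a : R[i]) : `|complex.Re a| <= normc a.
Proof. by rewrite -lecR -normrE_normC normc_ge_Re. Qed.

Variable V : normedModType R[i].
Implicit Types (x y : V) (a : R[i]).

Lemma rnormE x : `|x| = (rnorm x)%:C%C.
Proof. by rewrite RRe_real // ger0_real. Qed.

Lemma rnorm_ge0 x : 0 <= rnorm x.
Proof. by have := normr_ge0 x; rewrite lecE => /andP[]. Qed.

Lemma rnorm0 : rnorm (0 : V) = 0.
Proof. by rewrite /rnorm normr0. Qed.

Lemma rnorm_eq0 x : (rnorm x == 0) = (x == 0).
Proof.
apply/eqP/eqP => [x0|->]; last exact: rnorm0.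
by apply/eqP; rewrite -normr_eq0 rnormE x0.
Qed.

Lemma ler_rnormD x y : rnorm (x + y) <= rnorm x + rnorm y.
Proof. by have := ler_normD x y; rewrite !rnormE -rmorphD lecR. Qed.

Lemma rnormN x : rnorm (- x) = rnorm x.
Proof. by rewrite /rnorm normrN. Qed.

Lemma rnormB x y : rnorm (x - y) = rnorm (y - x).
Proof. by rewrite /rnorm distrC. Qed.

Lemma rnormZ a x : rnorm (a *: x) = normc a * rnorm x.
Proof. by rewrite {1}/rnorm normrZ normrE_normC rnormE -rmorphM. Qed.

End RealNorm.

Section InnerProduct.
Variables (R : realType) (V : completeNormedModType R[i]) (I : inner_product V).
Local Notation "<< x , y >>" := (ip I x y).
Implicit Types (x y z : V) (a : R[i]).

Lemma ip0l y : << 0, y >> = 0.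
Proof.
have := ipDl I 1 0 0 y; rewrite scale1r addr0 mul1r.
by move/(congr1 (fun c => c - << 0, y >>)); rewrite subrr addrK.
Qed.

Lemma ipDl' x y z : << x + y, z >> = << x, z >> + << y, z >>.
Proof. by rewrite -{1}(scale1r x) ipDl mul1r. Qed.

Lemma ipZl a x z : << a *: x, z >> = a * << x, z >>.
Proof. by rewrite -{1}(addr0 (a *: x)) ipDl ip0l addr0. Qed.

Lemma ipNl x z : << - x, z >> = - << x, z >>.
Proof. by rewrite -scaleN1r ipZl mulN1r. Qed.

Lemma ipBl x y z : << x - y, z >> = << x, z >> - << y, z >>.
Proof. by rewrite ipDl' ipNl. Qed.

Lemma ip0r y : << y, 0 >> = 0.
Proof. by rewrite ip_conj ip0l conjC0. Qed.

Lemma ipDr x y z : << z, x + y >> = << z, x >> + << z, y >>.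
Proof. by rewrite ip_conj ipDl' rmorphD [<< z, x >>]ip_conj [<< z, y >>]ip_conj. Qed.

Lemma ipZr a x z : << z, a *: x >> = a^* * << z, x >>.
Proof. by rewrite ip_conj ipZl rmorphM [<< z, x >>]ip_conj. Qed.

Lemma ipNr x z : << z, - x >> = - << z, x >>.
Proof. by rewrite -scaleN1r ipZr conjCN1 mulN1r. Qed.

Lemma ipBr x y z : << z, x - y >> = << z, x >> - << z, y >>.
Proof. by rewrite ipDr ipNr. Qed.

Lemma ipxx x : << x, x >> = (rnorm x ^+ 2)%:C%C.
Proof. by rewrite ip_norm rnormE rmorphXn. Qed.

Lemma ipxxBZ x y a : << x - a *: y, x - a *: y >> =
  << x, x >> - a^* * << x, y >> - a * << x, y >>^* + a * a^* * << y, y >>.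
Proof. by rewrite !ipBl !ipBr !ipZl !ipZr [<< y, x >>]ip_conj; ring. Qed.

Lemma cauchy_schwarz x y : `|<< x, y >>| <= `|x| * `|y|.
Proof.
have [->|y0] := eqVneq y 0; first by rewrite ip0r !normr0 mulr0.
set a := << x, y >>; set n := `|y| ^+ 2.
have n_gt0 : 0 < n by rewrite exprn_gt0 // normr_gt0.
have res_ge0 : 0 <= << x - (a / n) *: y, x - (a / n) *: y >>.
  by rewrite ip_norm exprn_ge0.
have res_eq : << x - (a / n) *: y, x - (a / n) *: y >> = `|x| ^+ 2 - `|a| ^+ 2 / n.
  rewrite !ipBl !ipBr !ipZl !ipZr !ip_norm -/n -[<< y, x >>]conjCK -ip_conj -/a.
  have nJ : n^* = n by rewrite conj_Creal // ger0_real // ltW.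
  rewrite !rmorphM rmorphV ?unitfE ?gt_eqF //= nJ normCK.
  by field; rewrite gt_eqF.
rewrite res_eq subr_ge0 ler_pdivrMr // -exprMn in res_ge0.
by rewrite -(ler_pXn2r (n := 2)) // ?nnegrE ?mulr_ge0.
Qed.

Lemma cauchy_schwarzR x y : normc << x, y >> <= rnorm x * rnorm y.
Proof. by have := cauchy_schwarz x y; rewrite normrE_normC !rnormE -rmorphM lecR. Qed.

Lemma parallelogram x y :
  rnorm (x - y) ^+ 2 + rnorm (x + y) ^+ 2 = 2 * rnorm x ^+ 2 + 2 * rnorm y ^+ 2.
Proof.
apply: (@complexI R).
rewrite !(rmorphD, rmorphM) /= -!rnormE -!expr2 -!(ip_norm I).
by rewrite !ipBl !ipDl' !ipBr !ipDr; ring.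
Qed.

End InnerProduct.

Section Subspace.
Variables (R : realType) (V : normedModType R[i]).
Implicit Types (N A : set V) (x : V) (a : R[i]).

Lemma lin_subspaceZ N a x : lin_subspace N -> N x -> N (a *: x).
Proof. by move=> [N0 NZ] Nx; rewrite -[_ *: _]addr0; apply: NZ. Qed.

Lemma lin_subspaceD N x y : lin_subspace N -> N x -> N y -> N (x + y).
Proof. by move=> [_ NZ] Nx Ny; rewrite -[x]scale1r; apply: NZ. Qed.

Lemma closure_rnormP A x :
  closure A x <-> forall e : R, 0 < e -> exists2 a, A a & rnorm (x - a) < e.
Proof.
split=> [Ax e e0|Ax B /nbhs_ballP[e e0 eB]].
  have [|a [Aa xa]] := Ax _ (nbhsx_ballx x (e%:C)%C _); first by rewrite ltcR.
  by exists a => //; move: xa; rewrite -ball_normE /= rnormE ltcR.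
have e_real : e = (complex.Re e)%:C%C by rewrite RRe_real // ger0_real // ltW.
have [|a Aa xa] := Ax (complex.Re e); first by rewrite -ltcR -e_real.
by exists a; split => //; apply: eB; rewrite -ball_normE /= e_real rnormE ltcR.
Qed.

Lemma lin_subspace_closure N : lin_subspace N -> lin_subspace (closure N).
Proof.
move=> hN; split; first exact/subset_closure/hN.1.
move=> a x y /closure_rnormP Nx /closure_rnormP Ny; apply/closure_rnormP => e e0.
have a1 : 0 < normc a + 1 by have := normc_ge0 a; lra.
have [x' Nx' xx'] := Nx (e / 2 / (normc a + 1)) (divr_gt0 (divr_gt0 e0 (ltr0Sn R 1)) a1).
have [y' Ny' yy'] := Ny (e / 2) (divr_gt0 e0 (ltr0Sn R 1)).
exists (a *: x' + y'); first by apply: (proj2 hN).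
have -> : a *: x + y - (a *: x' + y') = a *: (x - x') + (y - y').
  by rewrite scalerBr opprD addrACA.
apply: le_lt_trans (ler_rnormD _ _) _; rewrite rnormZ.
rewrite ltr_pdivlMr // in xx'.
have := normc_ge0 a; have := rnorm_ge0 (x - x'); nra.
Qed.

Lemma linear_on0 (W : normedModType R[i]) (D : set V) (f : V -> W) :
  D 0 -> linear_on D f -> f 0 = 0.
Proof.
move=> D0 hf; have := hf 1 0 0 D0 D0; rewrite scale1r addr0 scale1r.
by move/(congr1 (fun z => z - f 0)); rewrite subrr addrK.
Qed.

Lemma linear_onZ (W : normedModType R[i]) (D : set V) (f : V -> W) a x :
  D 0 -> linear_on D f -> D x -> f (a *: x) = a *: f x.
Proof.
by move=> D0 hf Dx; rewrite -[a *: x]addr0 hf // (linear_on0 D0 hf) addr0.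
Qed.

Lemma bounded_linear_rnorm (W : normedModType R[i]) (f : V -> W) :
  bounded_linear f -> exists2 M, 0 <= M & forall x, rnorm (f x) <= M * rnorm x.
Proof.
case=> _ [[a b] hM]; exists (Num.max a 0); first by rewrite le_max lexx orbT.
move=> x; have := hM x; rewrite !rnormE lecE /= !mulr0 subr0 => /andP[_ fx].
by apply: le_trans fx _; rewrite ler_wpM2r ?rnorm_ge0 ?le_max ?lexx.
Qed.

End Subspace.

Lemma sqr_le_of_approx (R : realType) (a d : R) : 0 <= a ->
  (forall e, 0 < e -> exists b, [/\ 0 <= b, b ^+ 2 < d + e & a < b + e]) ->
  a ^+ 2 <= d.
Proof.
move=> a0 approx; apply/ler_addgt0Pr => g g0.
have a3 : 0 < 2 * a + 3 by lra.
set e := Num.min 1 (g / (2 * a + 3)).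
have e0 : 0 < e by rewrite lt_min ltr01 divr_gt0.
have e1 : e <= 1 by rewrite ge_min lexx.
have eg : e * (2 * a + 3) <= g by rewrite -ler_pdivlMr // ge_min lexx orbT.
have [b [b0 hb ab]] := approx e e0.
have [ba|lt_ab] := leP a b; first nra.
(* otherwise a < b + e with b < a, so a ^+ 2 < b ^+ 2 + e * (2 * a + 1) *)
nra.
Qed.

Section Projection.
Variables (R : realType) (V : completeNormedModType R[i]) (I : inner_product V).
Local Notation "<< x , y >>" := (ip I x y).
Variables (N : set V) (x0 : V).
Hypothesis hN : lin_subspace N.

Lemma near_minimizers_close (d : R) u v :
  (forall n, N n -> d <= rnorm (x0 - n) ^+ 2) -> N u -> N v ->
  rnorm (u - v) ^+ 2 <= 2 * (rnorm (x0 - u) ^+ 2 - d) + 2 * (rnorm (x0 - v) ^+ 2 - d).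
Proof.
move=> d_lb Nu Nv.
set m := (2 : R[i])^-1 *: (v + u).
have Nm : N m := lin_subspaceZ _ hN (lin_subspaceD hN Nv Nu).
have mid : x0 - v + (x0 - u) = 2 *: (x0 - m).
  rewrite scalerBr /m scalerA divff ?scale1r ?pnatr_eq0 //.
  by rewrite scaler_nat mulr2n opprD addrACA.
have normc2 : normc (2 : R[i]) = 2.
  by rewrite -(rmorph_nat (real_complex R)) normc_real ger0_norm.
have := parallelogram I (x0 - v) (x0 - u).
rewrite mid rnormZ normc2 (_ : x0 - v - (x0 - u) = u - v); last first.
  by rewrite opprB addrC addrA subrK.
have := d_lb m Nm; nra.
Qed.

Section MinimizingSequence.
Variables (d : R) (u : nat -> V).
Hypothesis d_lb : forall n, N n -> d <= rnorm (x0 - n) ^+ 2.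
Hypothesis u_min : forall k, N (u k) /\ rnorm (x0 - u k) ^+ 2 < d + k.+1%:R^-1.

Lemma minimizing_seq_cvg : cvg (u @ \oo).
Proof.
have u_close i j : rnorm (u i - u j) ^+ 2 <= 2 * i.+1%:R^-1 + 2 * j.+1%:R^-1.
  have := near_minimizers_close d_lb (u_min i).1 (u_min j).1.
  have := (u_min i).2; have := (u_min j).2.
  set a := i.+1%:R^-1; set b := j.+1%:R^-1; lra.
have u_cauchy : cauchy (u @ \oo).
  apply: cauchy_exP => e e0.
  have e_real : e = (complex.Re e)%:C%C by rewrite RRe_real // ger0_real // ltW.
  have r0 : 0 < complex.Re e by rewrite -ltcR -e_real.
  have r4 : 0 < complex.Re e ^+ 2 / 4 by rewrite divr_gt0 // exprn_gt0.
  have [K hK] := filter_ex (near_infty_natSinv_lt (PosNum r4)).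
  exists (u K); apply: filterS (nbhs_infty_ge K) => k kK /=.
  rewrite -ball_normE /= e_real rnormE ltcR.
  have kK' : k.+1%:R^-1 <= K.+1%:R^-1 :> R.
    by rewrite lef_pV2 ?posrE ?ltr0n // ler_nat ltnS.
  have := u_close K k; rewrite /= in hK.
  set a := K.+1%:R^-1 in hK kK' *; set b := k.+1%:R^-1 in kK' *.
  have := rnorm_ge0 (u K - u k); nra.
exact: @cauchy_cvg _ _ (fmap_proper_filter u eventually_filter) u_cauchy.
Qed.

Lemma minimizing_seq_lim : rnorm (x0 - lim (u @ \oo)) ^+ 2 <= d.
Proof.
set p := lim (u @ \oo).
apply: sqr_le_of_approx (rnorm_ge0 _) _ => e e0.
have : \forall k \near \oo, k.+1%:R^-1 < e /\ rnorm (p - u k) < e.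
  near=> k; split; first by near: k; exact: (near_infty_natSinv_lt (PosNum e0)).
  rewrite -ltcR -rnormE; near: k.
  by move/cvgrPdist_lt: minimizing_seq_cvg; apply; rewrite ltcR.
move=> /filter_ex[k [ke uk]].
exists (rnorm (x0 - u k)); split; first exact: rnorm_ge0.
  by have := (u_min k).2; set a := k.+1%:R^-1 in ke *; lra.
have -> : x0 - p = (x0 - u k) + (u k - p) by rewrite addrA subrK.
by apply: le_lt_trans (ler_rnormD _ _) _; rewrite [rnorm (u k - p)]rnormB ltrD2l.
Unshelve. all: by end_near.
Qed.

End MinimizingSequence.

Lemma exists_dist_minimizer : closed N ->
  exists2 p, N p & forall n, N n -> rnorm (x0 - p) ^+ 2 <= rnorm (x0 - n) ^+ 2.
Proof.
move=> hc.
set D := [set rnorm (x0 - n) ^+ 2 | n in N].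
have hinf : has_inf D.
  split; first by exists (rnorm (x0 - 0) ^+ 2), 0; first exact: hN.1.
  by exists 0 => _ [n _ <-]; exact: sqr_ge0.
have d_lb n : N n -> inf D <= rnorm (x0 - n) ^+ 2.
  by move=> Nn; apply: (ge_inf hinf.2); exists n.
have : forall k : nat, exists n, N n /\ rnorm (x0 - n) ^+ 2 < inf D + k.+1%:R^-1.
  move=> k; have k_gt0 : (0 : R) < k.+1%:R^-1 by rewrite invr_gt0.
  have [_ [n Nn <-] dn] := inf_adherent k_gt0 hinf.
  by exists n.
move=> /choice[u u_min].
exists (lim (u @ \oo)) => [|n Nn].
  have uN : \forall k \near \oo, N (u k) by near=> k; exact: (u_min k).1.
  exact: closed_cvg hc uN _ (minimizing_seq_cvg d_lb u_min).
exact: le_trans (minimizing_seq_lim d_lb u_min) (d_lb n Nn).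
Unshelve. all: by end_near.
Qed.

Lemma dist_minimizer_orthogonal p : N p ->
  (forall n, N n -> rnorm (x0 - p) ^+ 2 <= rnorm (x0 - n) ^+ 2) ->
  forall m, N m -> << x0 - p, m >> = 0.
Proof.
move=> Np p_min m Nm.
set c := << x0 - p, m >>.
have M0 : 0 <= rnorm m ^+ 2 by exact: sqr_ge0.
set t := (rnorm m ^+ 2 + 1)^-1.
have t0 : 0 < t by rewrite invr_gt0; lra.
have tM : t * (rnorm m ^+ 2 + 1) = 1 by rewrite mulVf // gt_eqF //; lra.
have cc : c * c^* = (normc c ^+ 2)%:C%C by rewrite -normCK normrE_normC rmorphXn.
have tJ : (t%:C%C)^* = t%:C%C by rewrite conj_Creal // ger0_real // lecR ltW.
(* the step t = 1 / (|m|^2 + 1) makes the quadratic term smaller than the linear one *)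
have step : rnorm (x0 - (p + (t%:C * c)%C *: m)) ^+ 2 = rnorm (x0 - p) ^+ 2
    - 2 * t * normc c ^+ 2 + t ^+ 2 * normc c ^+ 2 * rnorm m ^+ 2.
  apply: (@complexI R).
  have -> : (rnorm (x0 - p) ^+ 2 - 2 * t * normc c ^+ 2
             + t ^+ 2 * normc c ^+ 2 * rnorm m ^+ 2)%:C%C
      = (rnorm (x0 - p) ^+ 2)%:C%C - 2 * t%:C%C * (normc c ^+ 2)%:C%C
        + t%:C%C ^+ 2 * (normc c ^+ 2)%:C%C * (rnorm m ^+ 2)%:C%C :> R[i].
    by rewrite rmorphD rmorphB !rmorphM (rmorph_nat (real_complex R)).
  by rewrite -!(ipxx I) -cc opprD addrA ipxxBZ rmorphM /= tJ -/c; ring.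
have := p_min _ (lin_subspaceD hN Np (lin_subspaceZ (t%:C * c)%C hN Nm)).
rewrite step => le_step.
have c2_le0 : normc c ^+ 2 <= 0.
  have tpos : 0 < t * (2 - t * rnorm m ^+ 2) by nra.
  by rewrite -(pmulr_lle0 _ tpos); nra.
have : normc c = 0 by apply/eqP; rewrite -sqrf_eq0 eq_le c2_le0 sqr_ge0.
by move/eq0_normc.
Qed.

Lemma orthogonal_projection : closed N ->
  exists2 p, N p & forall m, N m -> << x0 - p, m >> = 0.
Proof.
move=> hc; have [p Np p_min] := exists_dist_minimizer hc.
by exists p => //; exact: dist_minimizer_orthogonal.
Qed.

End Projection.

Section RieszRepresentation.
Variables (R : realType) (V : completeNormedModType R[i]) (I : inner_product V).
Local Notation "<< x , y >>" := (ip I x y).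
Variable phi : V -> R[i].
Hypothesis phi_lin : forall a x y, phi (a *: x + y) = a * phi x + phi y.
Hypothesis phi_bounded : exists M : R, forall x, normc (phi x) <= M * rnorm x.

Let phi0 : phi 0 = 0.
Proof.
have := phi_lin 1 0 0; rewrite scale1r addr0 mul1r.
by move/(congr1 (fun z => z - phi 0)); rewrite subrr addrK.
Qed.

Let phiZ a x : phi (a *: x) = a * phi x.
Proof. by rewrite -[a *: x]addr0 phi_lin phi0 addr0. Qed.

Let phiB x y : phi (x - y) = phi x - phi y.
Proof. by rewrite [x - y]addrC -scaleN1r phi_lin mulN1r addrC. Qed.

Lemma closed_functional_kernel : closed [set x | phi x = 0].
Proof.
have [M phiM] := phi_bounded.
move=> x /closure_rnormP x_adh; apply: eq0_normc; apply/eqP.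
rewrite eq_le normc_ge0 andbT; apply/ler_addgt0Pr => e e0; rewrite add0r.
have M1 : 0 < `|M| + 1 by have := normr_ge0 M; lra.
have [a Na xa] := x_adh (e / (`|M| + 1)) (divr_gt0 e0 M1).
rewrite ltr_pdivlMr // in xa.
have -> : phi x = phi (x - a) by rewrite phiB Na subr0.
apply: le_trans (phiM _) _; have := rnorm_ge0 (x - a); have := ler_norm M; nra.
Qed.

Lemma riesz_representation : exists u, forall x, phi x = << x, u >>.
Proof.
have [phi_eq0|/existsNP[x1 phix1]] := pselect (forall x, phi x = 0).
  by exists 0 => x; rewrite phi_eq0 ip0r.
have ker_sub : lin_subspace [set x | phi x = 0].
  by split=> [|a x y /= x0 y0]; rewrite ?phi0 // phi_lin x0 y0 mulr0 addr0.
have [p Np orth] := orthogonal_projection I x1 ker_sub closed_functional_kernel.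
set e := x1 - p.
have phie : phi e = phi x1 by rewrite phiB Np subr0.
have phie0 : phi e != 0 by rewrite phie; apply/eqP.
have n0 : << e, e >> != 0.
  by rewrite ip_norm expf_neq0 // normr_eq0; apply: contraNneq phie0 => ->; rewrite phi0.
have nJ : << e, e >>^* = << e, e >> by rewrite -ip_conj.
exists (((phi e)^* / << e, e >>) *: e) => x.
(* x - (phi x / phi e) e lies in the kernel, hence is orthogonal to e *)
have := orth (x - (phi x / phi e) *: e); rewrite /= phiB phiZ divfK // subrr.
move=> /(_ erefl); rewrite -/e ipBr ipZr => /eqP; rewrite subr_eq0 => /eqP exe.
rewrite ipZr rmorphM rmorphV ?unitfE //= conjCK nJ [<< x, e >>]ip_conj exe.
rewrite rmorphM /= conjCK nJ.
by field; rewrite n0 phie0.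
Qed.

End RieszRepresentation.

Lemma exists_common_threshold (R : realType) (T : eqType) (Q : T -> R -> Prop)
    (s : seq T) :
  (forall z d d', d' <= d -> Q z d -> Q z d') ->
  (forall z, z \in s -> exists2 d, 0 < d & Q z d) ->
  exists2 d, 0 < d & forall z, z \in s -> Q z d.
Proof.
move=> Q_anti; elim: s => [|a s IHs] hs; first by exists 1.
have [da da0 Qa] := hs a (mem_head a s).
have [ds ds0 Qs] : exists2 d, 0 < d & forall z, z \in s -> Q z d.
  by apply: IHs => z zs; apply: hs; rewrite in_cons zs orbT.
exists (Num.min da ds) => [|z]; first by rewrite lt_min da0 ds0.
rewrite in_cons => /orP[/eqP ->|zs]; first by apply: Q_anti Qa; rewrite ge_min lexx.
by apply: Q_anti (Qs z zs); rewrite ge_min lexx orbT.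
Qed.

Section Domination.
Variables (R : realType) (V U W : completeNormedModType R[i]).
Variables (IV : inner_product V) (IU : inner_product U) (IW : inner_product W).
Variables (R0 : V -> U) (K : V -> W).
Hypotheses (hR0 : bounded_linear R0) (hK : bounded_linear K).
Hypothesis R0_inj : forall y, R0 y = 0 -> y = 0.

Definition adjoint_range : set V :=
  [set w | exists v, forall x, ip IU (R0 x) v = ip IV x w].

(* The orthogonal complement of the range of the adjoint is the kernel of R0. *)
Lemma adjoint_range_dense u : closure adjoint_range u.
Proof.
have range_sub : lin_subspace adjoint_range.
  split=> [|a w1 w2 [v1 h1] [v2 h2]]; first by exists 0 => x; rewrite !ip0r.
  by exists (a *: v1 + v2) => x; rewrite !ipDr !ipZr h1 h2.
have [p Sp orth] := orthogonal_projection IV u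
  (lin_subspace_closure range_sub) (@closed_closure _ _).
suff -> : u = p by [].
apply/eqP; rewrite -subr_eq0; apply/eqP; set e := u - p.
have [M0 _ R0M] := bounded_linear_rnorm hR0.
have [w hw] : exists w, forall x, ip IU (R0 x) (R0 e) = ip IV x w.
  apply: riesz_representation => [a x y|].
    by rewrite (hR0.1 a x y I I) ipDl.
  exists (M0 * rnorm (R0 e)) => x; apply: le_trans (cauchy_schwarzR _ _ _) _.
  by rewrite mulrAC ler_wpM2r ?rnorm_ge0.
have := orth w (subset_closure (ex_intro _ (R0 e) hw)).
by rewrite -/e -hw ip_norm => /eqP; rewrite expf_eq0 normr_eq0 => /eqP/R0_inj.
Qed.

Lemma ip_dominated z (eta : R) : 0 < eta -> exists2 delta : R, 0 < delta &
  forall y, rnorm y <= 1 -> rnorm (R0 y) <= delta -> normc (ip IW (K y) z) <= eta.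
Proof.
move=> eta0.
have [MK _ KM] := bounded_linear_rnorm hK.
have [u hu] : exists u, forall y, ip IW (K y) z = ip IV y u.
  apply: riesz_representation => [a x y|].
    by rewrite (hK.1 a x y I I) ipDl.
  exists (MK * rnorm z) => x; apply: le_trans (cauchy_schwarzR _ _ _) _.
  by rewrite mulrAC ler_wpM2r ?rnorm_ge0.
have u_adh := (closure_rnormP _ _).1 (@adjoint_range_dense u).
have [s [v hv] us] := u_adh _ (divr_gt0 eta0 (ltr0Sn R 1)).
have v1 : 0 < rnorm v + 1 by have := rnorm_ge0 v; lra.
exists (eta / 2 / (rnorm v + 1)) => [|y y1 R0y]; first by rewrite !divr_gt0.
rewrite hu -[u](subrK s) ipDr -hv.
apply: le_trans (le_normcD _ _) _.
have := cauchy_schwarzR IV y (u - s); have := cauchy_schwarzR IU (R0 y) v.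
rewrite ler_pdivlMr // in R0y.
have := rnorm_ge0 y; have := rnorm_ge0 (u - s); have := rnorm_ge0 (R0 y).
have := rnorm_ge0 v; nra.
Qed.

Lemma compact_dominated :
  compact (closure [set K x | x in [set x : V | `|x| <= 1]]) ->
  forall eps : R, 0 < eps -> exists2 delta : R, 0 < delta &
  forall y, rnorm y <= 1 -> rnorm (R0 y) <= delta -> rnorm (K y) <= eps.
Proof.
set C := closure _; rewrite compact_cover => C_cover eps eps0.
have eps3 : (0 : R[i]) < (eps / 3)%:C%C by rewrite ltcR divr_gt0.
have [|F _ F_cover] := C_cover W C (fun z => ball z (eps / 3)%:C%C)
  (fun _ _ => ball_open _ _).
  by move=> x Cx; exists x => //; exact: ballxx.
have eta0 : 0 < eps ^+ 2 / 2 by rewrite divr_gt0 // exprn_gt0.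
have [d d0 hd] := @exists_common_threshold R W
  (fun z d => forall y, rnorm y <= 1 -> rnorm (R0 y) <= d ->
     normc (ip IW (K y) z) <= eps ^+ 2 / 2)
  (enum_fset F) (fun z d d' d'd Qd y y1 R0y => Qd y y1 (le_trans R0y d'd))
  (fun z _ => ip_dominated z eta0).
exists d => // y y1 R0y.
have CKy : C (K y) by apply: subset_closure; exists y; rewrite //= rnormE lecR.
have [z zF Kyz] := F_cover _ CKy.
move: Kyz; rewrite -ball_normE /= rnormE ltcR => Kyz.
(* |K y|^2 = <K y, z> + <K y, K y - z> with z an (eps/3)-net point of K y *)
have Ky2 : rnorm (K y) ^+ 2 <= eps ^+ 2 / 2 + rnorm (K y) * rnorm (z - K y).
  have -> : rnorm (K y) ^+ 2 = normc (ip IW (K y) (K y)).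
    by rewrite ipxx normc_real ger0_norm // sqr_ge0.
  rewrite -[X in ip _ _ X](subrK z) ipDr addrC.
  apply: le_trans (le_normcD _ _) _; rewrite lerD ?hd //.
  by rewrite [rnorm (z - _)]rnormB; exact: cauchy_schwarzR.
rewrite leNgt; apply/negP => Ky_gt; have := rnorm_ge0 (z - K y); nra.
Qed.

Lemma dominated_scaled (delta eta : R) :
  (forall y, rnorm y <= 1 -> rnorm (R0 y) <= delta -> rnorm (K y) <= eta) ->
  forall y (t : R), 0 <= t -> rnorm y <= t -> rnorm (R0 y) <= delta * t ->
  rnorm (K y) <= eta * t.
Proof.
move=> dom y t; rewrite le_eqVlt => /orP[/eqP <-|t0] yt R0y.
  have : rnorm y == 0 by rewrite eq_le yt rnorm_ge0.
  by rewrite rnorm_eq0 mulr0 => /eqP ->; rewrite (linear_on0 I hK.1) rnorm0.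
have tC : normc (t^-1)%:C%C = t^-1 by rewrite normc_real ger0_norm // invr_ge0 ltW.
have := dom (t^-1%:C *: y)%C.
rewrite !(linear_onZ _ I hK.1 I, linear_onZ _ I hR0.1 I) !rnormZ tC.
rewrite -!ler_pdivlMl ?invr_gt0 // !invrK !(mulrC t) mul1r.
by apply.
Qed.

End Domination.

Lemma dissipative_lower_bound (R : realType) (V : completeNormedModType R[i])
    (I : inner_product V) (D : set V) (T : V -> V) (lam : R[i]) w :
  dissipative I D T -> D w ->
  complex.Re lam * rnorm w <= rnorm (T w - lam *: w).
Proof.
move=> T_diss Dw; set x := T w - lam *: w.
have ReTw : complex.Re (ip I (T w) w) <= 0 by rewrite -lecR complexRe; exact: T_diss.
have ReBM (a l : R[i]) (r : R) :
    complex.Re (a - l * r%:C%C) = complex.Re a - complex.Re l * r.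
  by case: a l => ? ? [? ?] /=; rewrite mulr0 subr0.
have Rexw : complex.Re (ip I x w) =
    complex.Re (ip I (T w) w) - complex.Re lam * rnorm w ^+ 2.
  by rewrite /x ipBl ipZl ipxx ReBM.
have := normr_Re_le_normc (ip I x w); rewrite ler_norml => /andP[xw _].
have CS := cauchy_schwarzR I x w.
have [w0|w_gt0] := eqVneq (rnorm w) 0; first by rewrite w0 mulr0 rnorm_ge0.
have w_pos : 0 < rnorm w by rewrite lt_def w_gt0 rnorm_ge0.
rewrite -(ler_pM2r w_pos); nra.
Qed.

Lemma sector_Re (R : realType) (gamma : R) (mu : R[i]) :
  0 <= gamma < pi / 2 -> sector gamma mu ->
  normc mu * cos gamma <= - complex.Re mu.
Proof.
move=> /andP[g0 g_lt] [_ [theta [theta_gamma mu_polar]]].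
have pi0 : 0 < pi :> R := pi_gt0 R.
have -> : complex.Re mu = normc mu * cos theta.
  by rewrite {1}mu_polar normrE_normC /= mul0r subr0.
rewrite -mulrN ler_wpM2l ?normc_ge0 //.
have th_pi : `|theta - pi| <= pi by lra.
have g_pi : gamma <= pi by lra.
rewrite -[theta](subrK pi) cosDpi opprK -(cos_norm (theta - pi)) leNgt.
by rewrite ltr_cos ?in_itv /= ?normr_ge0 ?th_pi ?g0 ?g_pi // -leNgt.
Qed.

Lemma sector_dissipative_bound (R : realType) (V : completeNormedModType R[i])
    (I : inner_product V) (D : set V) (A : V -> V) (gamma : R) (mu : R[i]) w :
  dissipative I D (fun x => - A x) -> 0 <= gamma < pi / 2 -> sector gamma mu ->
  D w -> normc mu * cos gamma * rnorm w <= rnorm (A w - mu *: w).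
Proof.
move=> A_diss hgamma mu_sector Dw.
have := dissipative_lower_bound (- mu) A_diss Dw; rewrite /=.
rewrite (_ : - A w - - mu *: w = - (A w - mu *: w)); last first.
  by rewrite scaleNr opprK opprB addrC.
have ReN (z : R[i]) : complex.Re (- z) = - complex.Re z by case: z.
rewrite rnormN ReN; apply: le_trans.
by rewrite ler_wpM2r ?rnorm_ge0 ?sector_Re.
Qed.

Lemma shifted_bound (R : realType) (V : normedModType R[i]) (x w : V)
    (mu mu0 : R[i]) (c : R) :
  0 < c -> normc mu0 <= normc mu -> normc mu * c * rnorm w <= rnorm x ->
  rnorm (x + (mu - mu0) *: w) <= (1 + 2 / c) * rnorm x.
Proof.
move=> c0 mu0_mu w_small.
apply: le_trans (ler_rnormD _ _) _; rewrite rnormZ.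
have := le_normcD mu (- mu0); rewrite normcN => mu_mu0.
have mu_w : normc mu * rnorm w <= rnorm x / c by rewrite ler_pdivlMr // mulrAC.
have := rnorm_ge0 w.
rewrite mulrDl mul1r mulrAC -mulrA; nra.
Qed.

Theorem lemma2p3 (R : realType)
  (Hp Hm : completeNormedModType R[i])
  (Ip : inner_product Hp) (Iminus : inner_product Hm)
  (sepp : separable Hp) (sepm : separable Hm)
  (Dm : set Hm) (A22 : Hm -> Hm) (A12 : Hm -> Hp)
  (hDm : lin_subspace Dm) (hA22 : linear_on Dm A22) (hA12 : linear_on Dm A12)
  (hdiss : m_dissipative Iminus Dm (fun x => - A22 x))
  (hcpt : exists mu0 : R[i], 'Re mu0 < 0 /\
     exists RR, bounded_inverse_of Dm A22 mu0 RR /\ compact_operator (A12 \o RR)) :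
  forall gamma : R, 0 <= gamma < pi / 2 ->
  forall eps : R, 0 < eps ->
  exists r : R, 0 < r /\
  forall mu : R[i], sector gamma mu -> (r%:C)%C < `|mu| ->
  forall RR, bounded_inverse_of Dm A22 mu RR ->
  forall x : Hm, `|A12 (RR x)| <= (eps%:C)%C * `|x|.
Proof.
move=> gamma hgamma eps eps0.
case: hcpt => mu0 [_ [R0 [[R0_bl [R0_right R0_left]] [K_bl K_cpt]]]].
have R0_inj y : R0 y = 0 -> y = 0.
  by move=> R0y; have [_] := R0_right y; rewrite R0y (linear_on0 hDm.1 hA22) scaler0 subr0.
have c0 : 0 < cos gamma.
  by apply: cos_gt0_pihalf; case/andP: hgamma => g0 g1; rewrite g1 andbT; lra.
set B := 1 + 2 / cos gamma.
have B0 : 0 < B by rewrite /B; have := divr_gt0 (ltr0Sn R 1) c0; lra.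
have [delta delta0 dom] :=
  compact_dominated Iminus Iminus Ip R0_bl K_bl R0_inj K_cpt (divr_gt0 eps0 B0).
have Bcd : 0 < B * cos gamma * delta by rewrite !mulr_gt0.
exists (normc mu0 + (B * cos gamma * delta)^-1); split.
  by rewrite ltr_wpDl ?normc_ge0 ?invr_gt0.
move=> mu mu_sector; rewrite normrE_normC ltcR => mu_large RR [_ [RR_right _]] x.
have [Dw RRx] := RR_right x; set w := RR x in Dw RRx *.
have mu_inv : (B * cos gamma * delta)^-1 <= normc mu.
  by apply: ltW; apply: le_lt_trans mu_large; rewrite lerDr normc_ge0.
have w_small : normc mu * cos gamma * rnorm w <= rnorm x.
  by rewrite -RRx; exact: sector_dissipative_bound hdiss.1 hgamma mu_sector Dw.
set y := A22 w - mu0 *: w.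
have y_bound : rnorm y <= B * rnorm x.
  rewrite (_ : y = x + (mu - mu0) *: w); last by rewrite -RRx scalerBl addrA subrK.
  apply: shifted_bound => //; apply: ltW; apply: le_lt_trans mu_large.
  by rewrite lerDl invr_ge0 ltW.
have R0y_bound : rnorm (R0 y) <= delta * (B * rnorm x).
  rewrite -div1r ler_pdivrMr // in mu_inv.
  have := rnorm_ge0 w; have := mulr_gt0 delta0 B0.
  rewrite R0_left //; nra.
rewrite !rnormE -rmorphM lecR.
have -> : A12 w = (A12 \o R0) y by rewrite /= R0_left.
have := dominated_scaled R0_bl K_bl dom (mulr_ge0 (ltW B0) (rnorm_ge0 x)) y_bound R0y_bound.
by rewrite mulrA divfK // gt_eqF.
Qed.
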